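(* Let $G$ and $H$ be nontrivial finite, simple, connected graphs. Then (i) $\gamma_P(G\circ H)=1$ if and only if $\gamma(G)=1$ and $\gamma_P(H)=1$; (ii) $\gamma_P(G\circ H)=2$ if and only if either $\gamma(G)=2$ and $\gamma_P(H)=1$, or $\mathrm{diam}(\overline{G})>2$ and $\gamma_P(H)>1$.
   Context: The lexicographic product $G\circ H$ has vertex set $V(G)\times V(H)$, with $(g,h)$ adjacent to $(g',h')$ iff $gg'\in E(G)$, or $g=g'$ and $hh'\in E(H)$. $\overline{G}$ is the complement of $G$ (its diameter is infinite if it is disconnected). $\gamma(G)$ is the domination number. For $U\subseteq V(G)$, $cl(U)$ is obtained by coloring $U$ black and repeatedly applying: if a black vertex has exactly one white neighbor, that neighbor becomes black. $S$ is a power dominating set if $cl(N[S])=V(G)$; $\gamma_P$ is the minimum size of a power dominating set. *)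

From mathcomp Require Import all_boot.
Set Implicit Arguments. Unset Strict Implicit. Unset Printing Implicit Defensive.

Section Graphs.
Variable T : finType.
Variable e : rel T.

Definition simple_graph := symmetric e /\ irreflexive e.
Definition connected_graph := forall x y : T, connect e x y.
Definition nontrivial_graph := 1 < #|T|.

Definition closed_nbhd (S : {set T}) : {set T} :=
  [set w | (w \in S) || [exists v in S, e v w]].

Definition dominating (S : {set T}) := closed_nbhd S == [set: T].

(* domination number: minimum size of a dominating set (V itself dominates) *)
Definition domination_number : nat :=
  \big[minn/#|T|]_(S : {set T} | dominating S) #|S|.

(* one round of the propagation rule, applied at all black vertices at once:
   if a black vertex v has exactly one white neighbour w, w becomes black *)
Definition prop_step (B : {set T}) : {set T} :=
  B :|: [set w | [exists v in B,
          [&& e v w, w \notin B &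
              [forall u, (e v u && (u \notin B)) ==> (u == w)]]]].

(* cl(U): repeat until stable; #|T| rounds suffice *)
Definition closure_pd (U : {set T}) : {set T} := iter #|T| prop_step U.

Definition power_dominating (S : {set T}) := closure_pd (closed_nbhd S) == [set: T].

Definition power_domination_number : nat :=
  \big[minn/#|T|]_(S : {set T} | power_dominating S) #|S|.

Definition compl_rel : rel T := fun x y => (x != y) && ~~ e x y.

(* diam(complement G) > 2 (including the case of infinite diameter, i.e.
   complement disconnected): some pair of vertices is at distance > 2
   in the complement, i.e. not joined by a walk of length <= 2. *)
Definition compl_diam_gt2 : Prop :=
  exists x y : T, [/\ x != y, ~~ compl_rel x y &
                      ~~ [exists z, compl_rel x z && compl_rel z y]].
End Graphs.

Definition lex_rel (T1 T2 : finType) (e1 : rel T1) (e2 : rel T2) : rel (T1 * T2) :=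
  fun p q => e1 p.1 q.1 || ((p.1 == q.1) && e2 p.2 q.2).

From HB Require Import structures.
From mathcomp Require Import all_boot.
Set Implicit Arguments. Unset Strict Implicit. Unset Printing Implicit Defensive.

(* Propagation from U ends in the least superset of U that is stalled: no black
   vertex has exactly one white neighbour. So S power dominates iff every stalled
   superset of N[S] is the whole vertex set.
   In G o H, the vertices of a column {g} x V(H) share their neighbours outside
   the column, and a column has at least two vertices. Hence the columns over
   N_G[pi_G(S)] form a stalled set, so pi_G(S) must dominate G. If S meets no
   column adjacent to g, a proper stalled set of H containing N_H of the fiber of
   S over g leaves at least two vertices white (H is connected), so it lifts to a
   proper stalled set of G o H; hence that fiber must power dominate H.
   Conversely A x B power dominates G o H when A dominates G and B power
   dominates H, the columns over A behaving like H once all their outer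
   neighbours are black. Finally a 2-set dominating G o H outright comes from
   x, y in G with N(x) u N(y) = V(G), which is exactly diam(complement G) > 2. *)

(* [minn] has no unit on [nat], but a commutative semigroup law suffices for
   [bigD1]. *)
HB.instance Definition _ := SemiGroup.isComLaw.Build nat minn minnA minnC.

Section MinCard.
Variables (T : finType) (P : pred {set T}).

Definition min_card := \big[minn/#|T|]_(S | P S) #|S|.

Lemma min_card_le S : P S -> min_card <= #|S|.
Proof. by move=> PS; rewrite /min_card (bigD1 S) //= geq_minl. Qed.

Hypotheses (PT : P setT) (P0 : ~~ P set0).

Lemma min_card_attained : exists2 S, P S & #|S| = min_card.
Proof.
rewrite /min_card; apply: (big_ind (fun m => exists2 S, P S & #|S| = m)).
- by exists setT; rewrite ?cardsT.
- move=> _ _ [S PS <-] [S' PS' <-].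
  by case: (leqP #|S| #|S'|) => [/minn_idPl|/ltnW/minn_idPr] m;
    [exists S | exists S']; rewrite ?m.
- by move=> S PS; exists S.
Qed.

Lemma min_card_gt0 : 0 < min_card.
Proof.
have [S PS <-] := min_card_attained; rewrite card_gt0.
by apply: contraNneq P0 => <-.
Qed.

Lemma min_card_eq1 : min_card = 1 <-> exists x, P [set x].
Proof.
split=> [m1 | [x Px]].
  have [S PS] := min_card_attained; rewrite m1 => /eqP/cards1P[x Sx].
  by exists x; rewrite -Sx.
by apply/eqP; rewrite eqn_leq min_card_gt0 andbT -(cards1 x) min_card_le.
Qed.

Lemma min_card_gt1 : 1 < min_card <-> forall x, ~~ P [set x].
Proof.
split=> [m_gt1 x | no1].
  by apply: contraTN m_gt1 => Px; rewrite -leqNgt -(cards1 x) min_card_le.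
rewrite ltn_neqAle min_card_gt0 andbT; apply/eqP => /esym/min_card_eq1[x].
exact/negP/no1.
Qed.

Lemma min_card_eq2 :
  min_card = 2 <-> (exists2 S, P S & #|S| = 2) /\ forall x, ~~ P [set x].
Proof.
split=> [m2 | [[S PS S2] no1]].
  split; last by apply/min_card_gt1; rewrite m2.
  by have [S PS] := min_card_attained; rewrite m2; exists S.
by apply/eqP; rewrite eqn_leq -{1}S2 min_card_le //=; apply/min_card_gt1.
Qed.

End MinCard.

Lemma iter_card_fixed (T : finType) (f : {set T} -> {set T}) (U : {set T}) :
  (forall X : {set T}, X \subset f X) -> f (iter #|T| f U) = iter #|T| f U.
Proof.
move=> f_ext; have fT : f setT = setT by apply/eqP; rewrite eqEsubset subsetT f_ext.
suff [grow|//] : #|T| <= #|iter #|T| f U| \/ f (iter #|T| f U) = iter #|T| f U.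
  suff -> : iter #|T| f U = setT by [].
  by apply/eqP; rewrite eqEcard subsetT cardsT.
elim: #|T| => [|k [IHk|IHk]] /=; [by left | | by right; rewrite IHk].
have [fixed|moved] := eqVneq (f (iter k f U)) (iter k f U).
  by right; rewrite !fixed.
by left; apply: leq_ltn_trans IHk (proper_card _); rewrite properEneq eq_sym moved f_ext.
Qed.

Lemma exists_neq (T : finType) (x : T) : 1 < #|T| -> exists y, y != x.
Proof.
case/card_gt1P => a [b [_ _ ab]].
by case: (eqVneq a x) => [<-|ax]; [exists b; rewrite eq_sym | exists a].
Qed.

Lemma connect_cross (T : finType) (e : rel T) (A : {set T}) x y :
  x \in A -> connect e x y -> y \notin A ->
  exists u v, [/\ u \in A, v \notin A & e u v].
Proof.
move=> xA /connectP[p + ->]; elim: p x xA => [|a p IHp] x xA /=; first by rewrite xA.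
case/andP=> exa pa; case: (boolP (a \in A)) => [aA|aA _]; first exact: IHp pa.
by exists x, a.
Qed.

Section Graph.
Variables (T : finType) (e : rel T).
Implicit Types (S U X Y : {set T}).

Lemma in_closed_nbhd S w :
  (w \in closed_nbhd e S) = (w \in S) || [exists v in S, e v w].
Proof. by rewrite inE. Qed.

Lemma mem_closed_nbhd S s : s \in S -> s \in closed_nbhd e S.
Proof. by rewrite in_closed_nbhd => ->. Qed.

Lemma closed_nbhd_adj S s w : s \in S -> e s w -> w \in closed_nbhd e S.
Proof.
move=> sS esw; rewrite in_closed_nbhd; apply/orP; right.
by apply/existsP; exists s; rewrite sS.
Qed.

Lemma dominatingP S : reflect (forall w, w \in closed_nbhd e S) (dominating e S).
Proof.
by apply: (iffP eqP) => [-> w | NS]; [rewrite inE | apply/setP => w; rewrite NS inE].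
Qed.

(* Equivalently, [~: X] is empty or a fort in the sense of zero forcing. *)
Definition stalled (X : {set T}) :=
  forall v w, v \in X -> w \notin X -> e v w ->
    exists u, [/\ u \notin X, e v u & u != w].

Lemma prop_step_fixedP X : prop_step e X = X <-> stalled X.
Proof.
split=> [fixed v w vX wX evw | stX].
  have [/existsP[u /and3P[uX evu uw]]|/existsPn lone] :=
    boolP [exists u, [&& u \notin X, e v u & u != w]]; first by exists u.
  have : w \in prop_step e X.
    rewrite !inE; apply/orP; right; apply/existsP; exists v; rewrite vX evw wX /=.
    apply/forallP => u; apply/implyP => /andP[evu uX].
    by move: (lone u); rewrite uX evu /= negbK.
  by rewrite fixed (negbTE wX).
apply/setP => w; rewrite !inE; case: (boolP (w \in X)) => //= wX.
apply/existsP => -[v /andP[vX /andP[evw /forallP lone]]].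
have [u [uX evu uw]] := stX v w vX wX evw.
by move: (lone u); rewrite evu uX (negbTE uw).
Qed.

Lemma prop_stepS : {homo prop_step e : X Y / X \subset Y}.
Proof.
move=> X Y sXY; apply/subsetP => w; rewrite !inE.
case/orP=> [wX|]; first by rewrite (subsetP sXY).
case: (boolP (w \in Y)) => //= wY /existsP[v /andP[vX /and3P[evw _ /forallP lone]]].
apply/existsP; exists v; rewrite (subsetP sXY) //= evw.
apply/forallP => u; apply/implyP => /andP[evu uY]; apply: (implyP (lone u)).
by rewrite evu; apply: contra uY; apply: (subsetP sXY).
Qed.

Lemma sub_closure_pd U : U \subset closure_pd e U.
Proof.
rewrite /closure_pd; elim: #|T| => //= k IHk.
exact: subset_trans IHk (subsetUl _ _).
Qed.

Lemma closure_pd_stalled U : stalled (closure_pd e U).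
Proof. by apply/prop_step_fixedP/iter_card_fixed => X; apply: subsetUl. Qed.

Lemma closure_pd_min U X : U \subset X -> stalled X -> closure_pd e U \subset X.
Proof.
move=> sUX /prop_step_fixedP fixed; rewrite /closure_pd.
by elim: #|T| => //= k IHk; rewrite -fixed; apply: prop_stepS.
Qed.

Lemma power_dominatingP S :
  power_dominating e S <->
  forall X, closed_nbhd e S \subset X -> stalled X -> X = setT.
Proof.
split=> [/eqP pd X NX stX | min].
  by apply/eqP; rewrite eqEsubset subsetT -pd closure_pd_min.
by apply/eqP/min; [apply: sub_closure_pd | apply: closure_pd_stalled].
Qed.

Lemma dominating_power_dominating S : dominating e S -> power_dominating e S.
Proof.
move=> /eqP dom; apply/power_dominatingP => X.
by rewrite dom => /subsetP sTX _; apply/setP => x; rewrite inE sTX ?inE.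
Qed.

Lemma setT_dominating : dominating e setT.
Proof. by apply/dominatingP => w; rewrite mem_closed_nbhd ?inE. Qed.

Lemma set0_not_dominating (x : T) : ~~ dominating e set0.
Proof.
apply/negP => /dominatingP /(_ x); rewrite in_closed_nbhd inE.
by case/existsP => v; rewrite inE.
Qed.

Lemma set0_not_power_dominating (x : T) : ~~ power_dominating e set0.
Proof.
apply/negP => /power_dominatingP /(_ set0) X0.
have : set0 = [set: T].
  apply: X0; last by move=> v w; rewrite inE.
  by apply/subsetP => w; rewrite in_closed_nbhd inE => /existsP[v]; rewrite inE.
by move/setP/(_ x); rewrite !inE.
Qed.

Lemma stalled_compl_two Y y :
  connected_graph e -> 1 < #|T| -> stalled Y -> y \notin Y ->
  exists2 y', y' \notin Y & y' != y.
Proof.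
move=> conn nt stY yY; apply/exists_inP; apply: contraT => /exists_inPn lone.
have only_y v : v \notin Y -> v = y.
  by move=> vY; apply/eqP; move: (lone v vY); rewrite negbK.
have [Y0|[x xY]] := set_0Vmem Y.
  by have [y' y'y] := exists_neq y nt; move: y'y; rewrite (only_y y') ?eqxx // Y0 inE.
have [u [v [uY vY euv]]] := connect_cross xY (conn x y) yY.
have [u' [u'Y _ u'v]] := stY u v uY vY euv.
by move: u'v; rewrite (only_y u') // (only_y v) ?eqxx.
Qed.

Hypotheses (e_sym : symmetric e) (e_irr : irreflexive e).

Lemma compl_diam_gt2P :
  compl_diam_gt2 e <-> exists x y, x != y /\ forall z, e x z || e y z.
Proof.
split=> [[x [y [xy ncxy /existsPn nz]]] | [x [y [xy tot]]]].
  have exy : e x y by move: ncxy; rewrite /compl_rel xy negbK.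
  exists x, y; split=> // z.
  case: (eqVneq z x) => [->|zx]; first by rewrite e_sym exy orbT.
  case: (eqVneq z y) => [->|zy]; first by rewrite exy.
  by move: (nz z); rewrite /compl_rel eq_sym zx zy /= negb_and !negbK (e_sym z).
exists x, y; split=> //.
  by rewrite /compl_rel xy negbK e_sym; have := tot x; rewrite e_irr.
apply/existsPn => z; rewrite /compl_rel !negb_and !negbK.
case/orP: (tot z) => [exz|eyz]; first by rewrite exz orbT.
by rewrite (e_sym z) eyz !orbT.
Qed.

Lemma compl_diam_gt2_edge x y :
  e x y -> dominating e [set x; y] -> compl_diam_gt2 e.
Proof.
move=> exy /dominatingP dom; apply/compl_diam_gt2P; exists x, y; split.
  by apply: contraTneq exy => ->; rewrite e_irr.
move=> z; move: (dom z); rewrite in_closed_nbhd !inE.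
case/orP=> [/orP[/eqP->|/eqP->]|/existsP[v]]; first by rewrite e_sym exy orbT.
  by rewrite exy.
by rewrite !inE => /andP[/orP[/eqP->|/eqP->] ->]; rewrite ?orbT.
Qed.

Lemma compl_diam_gt2_universal g :
  1 < #|T| -> dominating e [set g] -> compl_diam_gt2 e.
Proof.
move=> nt /dominatingP dom; have [y yg] := exists_neq g nt.
have egz z : z != g -> e g z.
  move=> zg; move: (dom z); rewrite in_closed_nbhd inE (negbTE zg) /=.
  by case/existsP => v; rewrite inE => /andP[/eqP->].
apply/compl_diam_gt2P; exists g, y; split; first by rewrite eq_sym.
move=> z; case: (eqVneq z g) => [->|zg]; last by rewrite egz.
by rewrite (e_sym y) (egz y) ?orbT.
Qed.

End Graph.

Definition fiber (T1 T2 : finType) (S : {set T1 * T2}) (g : T1) : {set T2} :=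
  [set y | (g, y) \in S].

Section LexProduct.
Variables (T1 T2 : finType) (e1 : rel T1) (e2 : rel T2).
Implicit Types (S X : {set T1 * T2}) (A : {set T1}) (B : {set T2}).
Local Notation lex := (lex_rel e1 e2).

Lemma lex_fiber_stalled X g :
  stalled lex X -> (forall c y, e1 g c -> (c, y) \in X) -> stalled e2 (fiber X g).
Proof.
move=> stX nbX v w; rewrite !inE => vX wX evw.
have ev : lex (g, v) (g, w) by rewrite /lex_rel /= eqxx evw orbT.
have [[u1 u2] [uX evu uw]] := stX _ _ vX wX ev.
move: evu; rewrite /lex_rel /= => /orP[/(nbX _ u2)|/andP[/eqP gu1 evu2]].
  by rewrite (negbTE uX).
subst u1; by exists u2; rewrite inE; split=> //; apply: contraNneq uw => ->.
Qed.

Lemma lex_pd_dominating_fst S :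
  1 < #|T2| -> power_dominating lex S -> dominating e1 (fst @: S).
Proof.
move=> nt2 /power_dominatingP pdS; have [y0 _] := card_gt0P (ltnW nt2).
set D := closed_nbhd e1 (fst @: S).
suff /setP XT : [set p : T1 * T2 | p.1 \in D] = setT.
  by apply/dominatingP => c; have := XT (c, y0); rewrite !inE.
apply: pdS.
  apply/subsetP => -[c y]; rewrite in_closed_nbhd inE /=.
  case/orP=> [cyS|/existsP[[a b] /andP[abS]]].
    exact: mem_closed_nbhd (imset_f fst cyS).
  rewrite /lex_rel /= => /orP[eac|/andP[/eqP <- _]].
    exact: closed_nbhd_adj (imset_f fst abS) eac.
  exact: mem_closed_nbhd (imset_f fst abS).
move=> [v1 v2] [w1 w2]; rewrite !inE /= => vD wD.
rewrite /lex_rel /= => /orP[evw|/andP[/eqP v1w1 _]]; last by move: wD; rewrite -v1w1 vD.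
have [y' y'w] := exists_neq w2 nt2.
exists (w1, y'); rewrite !inE /= wD /lex_rel /= evw; split=> //.
by apply: contraNneq y'w => -[->].
Qed.

Lemma lex_pd_fiber S g :
  connected_graph e2 -> 1 < #|T2| -> (forall s, s \in S -> ~~ e1 s.1 g) ->
  power_dominating lex S -> power_dominating e2 (fiber S g).
Proof.
move=> conn2 nt2 nadjS /power_dominatingP pdS.
set Y := closure_pd e2 (closed_nbhd e2 (fiber S g)).
have stY : stalled e2 Y by apply: closure_pd_stalled.
suff /setP XT : [set p : T1 * T2 | (p.1 != g) || (p.2 \in Y)] = setT.
  by apply/eqP/setP => y; have := XT (g, y); rewrite !inE eqxx.
apply: pdS.
  apply/subsetP => -[c y] Ny; rewrite inE /=.
  case: (eqVneq c g) => [cg|//] /=; subst c.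
  apply: (subsetP (sub_closure_pd _ _)).
  move: Ny; rewrite in_closed_nbhd => /orP[gyS|/existsP[[a b] /andP[abS]]].
    by apply: mem_closed_nbhd; rewrite inE.
  rewrite /lex_rel /= (negbTE (nadjS _ abS)) => /andP[/eqP ag eby].
  by apply: closed_nbhd_adj eby; rewrite inE -ag.
move=> [v1 v2] [w1 w2]; rewrite !inE /= negb_or negbK => vX /andP[/eqP w1g w2Y].
subst w1; rewrite /lex_rel /= => /orP[ev1g|/andP[/eqP v1g ev2w]].
  have [y' y'Y y'w] := stalled_compl_two conn2 nt2 stY w2Y.
  exists (g, y'); rewrite !inE /= eqxx y'Y /lex_rel /= ev1g; split=> //.
  by apply: contraNneq y'w => -[->].
subst v1; move: vX; rewrite eqxx /= => v2Y.
have [u [uY evu uw]] := stY v2 w2 v2Y w2Y ev2w.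
exists (g, u); rewrite !inE /= eqxx uY /lex_rel /= evu orbT; split=> //.
by apply: contraNneq uw => -[->].
Qed.

Lemma lex_pd_setX A B :
  dominating e1 A -> power_dominating e2 B -> power_dominating lex (setX A B).
Proof.
move=> /dominatingP domA pdB; apply/power_dominatingP => X NX stX.
apply/setP => -[c y]; rewrite inE.
have [B0|[b bB]] := set_0Vmem B.
  by move: pdB; rewrite B0 (negbTE (set0_not_power_dominating e2 y)).
move/power_dominatingP: pdB => minB.
have adjX a c' y' : a \in A -> lex (a, b) (c', y') -> (c', y') \in X.
  by move=> aA ab; apply: (subsetP NX); apply: closed_nbhd_adj ab; rewrite in_setX aA.
case: (boolP (c \in A)) => cA; last first.
  move: (domA c); rewrite in_closed_nbhd (negbTE cA) => /existsP[a /andP[aA eac]].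
  by apply: adjX aA _; rewrite /lex_rel /= eac.
suff : fiber X c = setT by move/setP/(_ y); rewrite !inE.
apply: minB.
  apply/subsetP => y'; rewrite in_closed_nbhd inE.
  case/orP=> [y'B|/existsP[b' /andP[b'B eb'y']]].
    by apply: (subsetP NX); apply: mem_closed_nbhd; rewrite in_setX cA y'B.
  by apply: (subsetP NX); apply: closed_nbhd_adj (_ : (c, b') \in setX A B) _;
    rewrite ?in_setX ?cA // /lex_rel /= eqxx eb'y' orbT.
by apply: lex_fiber_stalled => // c' y' ecc'; apply: adjX cA _; rewrite /lex_rel /= ecc'.
Qed.

Lemma lex_dominating_setX A B b :
  (forall c, exists2 a, a \in A & e1 a c) -> b \in B -> dominating lex (setX A B).
Proof.
move=> domA bB; apply/dominatingP => -[c y]; have [a aA eac] := domA c.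
by apply: (closed_nbhd_adj (s := (a, b))); rewrite ?in_setX ?aA // /lex_rel /= eac.
Qed.

End LexProduct.

Section LexPowerDomination.
Variables (T1 T2 : finType) (e1 : rel T1) (e2 : rel T2).
Hypotheses (sym1 : symmetric e1) (irr1 : irreflexive e1) (nt1 : 1 < #|T1|).
Hypotheses (conn2 : connected_graph e2) (nt2 : 1 < #|T2|).
Local Notation lex := (lex_rel e1 e2).

Lemma lex_pd_set1 p :
  power_dominating lex [set p] <->
  dominating e1 [set p.1] /\ power_dominating e2 [set p.2].
Proof.
split=> [pdp | [domg pdh]].
  split; first by rewrite -(imset_set1 fst); exact: lex_pd_dominating_fst pdp.
  have -> : [set p.2] = fiber [set p] p.1.
    by apply/setP => y; rewrite !inE; case: p {pdp} => a b; rewrite xpair_eqE eqxx.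
  by apply: lex_pd_fiber pdp => // s; rewrite inE => /eqP ->; rewrite irr1.
have -> : [set p] = setX [set p.1] [set p.2].
  by case: p {domg pdh} => a b; apply/setP => -[c d]; rewrite !inE xpair_eqE.
exact: lex_pd_setX.
Qed.

Lemma lex_pd_set2 p q :
  p.1 != q.1 -> ~~ e1 q.1 p.1 -> power_dominating lex [set p; q] ->
  power_dominating e2 [set p.2].
Proof.
move=> pq nepq pdpq; have -> : [set p.2] = fiber [set p; q] p.1.
  apply/setP => y; rewrite !inE; case: p q pq {nepq pdpq} => [a b] [c d] /= ac.
  by rewrite !xpair_eqE eqxx (negbTE ac) /= orbF.
by apply: lex_pd_fiber pdpq => // s; rewrite !inE => /orP[] /eqP -> //; rewrite irr1.
Qed.

Let pdT : power_dominating lex setT :=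
  dominating_power_dominating (setT_dominating _).

Let pd0 : ~~ power_dominating lex set0.
Proof.
have [x _] := card_gt0P (ltnW nt1); have [y _] := card_gt0P (ltnW nt2).
exact: set0_not_power_dominating (x, y).
Qed.

Let domT : dominating e1 setT := setT_dominating e1.

Let dom0 : ~~ dominating e1 set0.
Proof. by have [x _] := card_gt0P (ltnW nt1); apply: set0_not_dominating x. Qed.

Let pdT2 : power_dominating e2 setT :=
  dominating_power_dominating (setT_dominating _).

Let pd02 : ~~ power_dominating e2 set0.
Proof. by have [y _] := card_gt0P (ltnW nt2); apply: set0_not_power_dominating y. Qed.

Lemma lex_pd_number_eq1 :
  power_domination_number lex = 1 <->
  domination_number e1 = 1 /\ power_domination_number e2 = 1.
Proof.
split=> [/(min_card_eq1 pdT pd0)[p /lex_pd_set1[dg ph]] |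
         [/(min_card_eq1 domT dom0)[g dg] /(min_card_eq1 pdT2 pd02)[h ph]]].
  by split; [apply/(min_card_eq1 domT dom0); exists p.1 |
             apply/(min_card_eq1 pdT2 pd02); exists p.2].
by apply/(min_card_eq1 pdT pd0); exists (g, h); apply/lex_pd_set1.
Qed.

Lemma lex_pd_number_eq2_cases :
  power_domination_number lex = 2 ->
  (domination_number e1 = 2 /\ power_domination_number e2 = 1) \/
  (compl_diam_gt2 e1 /\ 1 < power_domination_number e2).
Proof.
case/(min_card_eq2 pdT pd0) => -[S pdpq /eqP/cards2P[p [q [_ defS]]]] no1.
subst S.
have dom2 : dominating e1 [set p.1; q.1].
  by have := lex_pd_dominating_fst nt2 pdpq; rewrite imsetU1 imset_set1.
have [/existsP[h ph]|/existsPn noh] := boolP [exists h, power_dominating e2 [set h]].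
  left; split; last by apply/(min_card_eq1 pdT2 pd02); exists h.
  have nodom g : ~~ dominating e1 [set g].
    by apply: contra (no1 (g, h)) => dg; apply/lex_pd_set1.
  have p1q1 : p.1 != q.1.
    by apply: contraNneq (nodom p.1) => pq1; rewrite -pq1 setUid in dom2.
  apply/(min_card_eq2 domT dom0); split=> //.
  by exists [set p.1; q.1]; rewrite ?cards2 ?p1q1.
right; split; last exact/(min_card_gt1 pdT2 pd02).
have [pq1|p1q1] := eqVneq p.1 q.1.
  by rewrite -pq1 setUid in dom2; apply: compl_diam_gt2_universal dom2.
have [epq|nepq] := boolP (e1 p.1 q.1); first exact: compl_diam_gt2_edge dom2.
by move: (noh p.2); rewrite (lex_pd_set2 p1q1 _ pdpq) // sym1.
Qed.

Lemma lex_pd_number_eq2_of_cases :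
  (domination_number e1 = 2 /\ power_domination_number e2 = 1) \/
  (compl_diam_gt2 e1 /\ 1 < power_domination_number e2) ->
  power_domination_number lex = 2.
Proof.
case=> [[/(min_card_eq2 domT dom0)[[A domA A2] nodom]
          /(min_card_eq1 pdT2 pd02)[h ph]] |
        [/(compl_diam_gt2P sym1 irr1)[x [y [xy tot]]]
          /(min_card_gt1 pdT2 pd02) noh]];
  apply/(min_card_eq2 pdT pd0); split.
- by exists (setX A [set h]); [apply: lex_pd_setX | rewrite cardsX A2 cards1].
- by move=> r; apply: contra (nodom r.1) => /lex_pd_set1[].
- have [h _] := card_gt0P (ltnW nt2).
  exists (setX [set x; y] [set h]); last by rewrite cardsX cards2 xy cards1.
  apply/dominating_power_dominating; apply: lex_dominating_setX (set11 h) => c.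
  by case/orP: (tot c) => ?; [exists x | exists y]; rewrite ?inE ?eqxx ?orbT.
- by move=> r; apply: contra (noh r.2) => /lex_pd_set1[].
Qed.

End LexPowerDomination.

Theorem mainTheorem9 (T1 T2 : finType) (e1 : rel T1) (e2 : rel T2) :
  simple_graph e1 -> connected_graph e1 -> nontrivial_graph T1 ->
  simple_graph e2 -> connected_graph e2 -> nontrivial_graph T2 ->
  (power_domination_number (lex_rel e1 e2) = 1 <->
     domination_number e1 = 1 /\ power_domination_number e2 = 1) /\
  (power_domination_number (lex_rel e1 e2) = 2 <->
     (domination_number e1 = 2 /\ power_domination_number e2 = 1) \/
     (compl_diam_gt2 e1 /\ 1 < power_domination_number e2)).
Proof.
move=> [sym1 irr1] _ nt1 _ conn2 nt2; split; first exact: lex_pd_number_eq1.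
split; [exact: lex_pd_number_eq2_cases | exact: lex_pd_number_eq2_of_cases].
Qed.
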